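(* Let $K$ be a field (e.g. $K=\mathbb{C}$), let $r\geqslant 0$ be an integer, and let $\{a_0(n)\}_{n\in\mathbb{Z}},\ldots,\{a_r(n)\}_{n\in\mathbb{Z}}$ be arbitrary sequences of elements of $K$. Let $V$ be the $K$-vector space of all sequences $\{x(n)\}_{n\in\mathbb{Z}}$ of elements of $K$ satisfying \[ a_r(n)x(n+r)+\ldots+a_1(n)x(n+1)+a_0(n)x(n)=0\quad\text{for every } n\in\mathbb{Z}. \] Assume $\dim_K V=\infty$. Then there exists a ray $\mathcal{S}\subseteq\mathbb{Z}$, i.e. a set of the form $\{i\in\mathbb{Z}\mid i\geqslant i_0\}$ or $\{i\in\mathbb{Z}\mid i\leqslant i_0\}$ for some $i_0\in\mathbb{Z}$, such that the subspace of $V$ consisting of the sequences whose support is contained in $\mathcal{S}$ is infinite-dimensional.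
   Context: The support of a sequence $\{x(n)\}_{n\in\mathbb{Z}}$ is $\{i\in\mathbb{Z}\mid x(i)\neq 0\}$. *)

From mathcomp Require Import all_boot all_order all_algebra.
Set Implicit Arguments. Unset Strict Implicit. Unset Printing Implicit Defensive.
Import Order.TTheory GRing.Theory Num.Theory.
Local Open Scope ring_scope.

(* x : int -> K satisfies  sum_{j=0}^r a_j(n) x(n+j) = 0  for every n in Z.
   The coefficient sequences a_0,...,a_r are given as a : nat -> int -> K
   (only a 0, ..., a r are used). *)
Definition in_V (K : fieldType) (r : nat) (a : nat -> int -> K) (x : int -> K) : Prop :=
  forall n : int, \sum_(j < r.+1) a j n * x (n + (j : nat)%:Z) = 0.

Definition lin_indep (K : fieldType) (m : nat) (x : 'I_m -> int -> K) : Prop :=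
  forall c : 'I_m -> K,
    (forall k : int, \sum_(i < m) c i * x i k = 0) -> forall i, c i = 0.

Definition inf_dim (K : fieldType) (W : (int -> K) -> Prop) : Prop :=
  forall m : nat, exists x : 'I_m -> int -> K, (forall i, W (x i)) /\ lin_indep x.

Definition supp_sub (K : fieldType) (x : int -> K) (S : int -> Prop) : Prop :=
  forall i : int, x i != 0 -> S i.

From mathcomp Require Import all_boot all_order all_algebra.
From mathcomp Require Import zify.
From Stdlib Require Import Classical.
Import Order.TTheory GRing.Theory Num.Theory.
Local Open Scope ring_scope.

(* The ray can be taken at i0 = 0. Suppose no m1 independent solutions are
   supported on [0, oo) and no m2 on (-oo, 0], and take N = r + m1 + m2
   independent solutions. Their combinations vanishing at 0, ..., r-1 form a
   space S of dimension at least m1 + m2; for these, the parts on n >= 0 and on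
   n < 0 are again solutions, because the recurrence at n never links an index
   < 0 with one >= r. On a complement in S of the kernel of "take the part on
   n >= 0" this map is injective, so that complement has dimension < m1; on the
   kernel the part on n < 0 is the whole solution, so the kernel has dimension
   < m2. This contradicts dim S >= m1 + m2. *)

Section Sequences.
Set Implicit Arguments. Unset Strict Implicit.
Variable K : fieldType.

Definition has_indep_family (W : (int -> K) -> Prop) (m : nat) : Prop :=
  exists x : 'I_m -> int -> K, (forall i, W (x i)) /\ lin_indep x.

Definition lin_comb n (c : 'rV[K]_n) (y : 'I_n -> int -> K) (k : int) : K :=
  \sum_(i < n) c 0 i * y i k.

Lemma lin_indep_comp m n (w : 'I_m -> 'I_n) (y : 'I_n -> int -> K) :
  injective w -> lin_indep y -> lin_indep (y \o w).
Proof.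
move=> w_inj y_indep c c_y0 i.
pose d j := \sum_(i' | w i' == j) c i'.
have d_y0 k : \sum_(j < n) d j * y j k = 0.
  rewrite -[RHS](c_y0 k) (partition_big w predT) //=; apply: eq_bigr => j _.
  by rewrite big_distrl /=; apply: eq_bigr => i' /eqP <-.
have := y_indep d d_y0 (w i).
by rewrite /d (big_pred1 i) // => i'; rewrite /= inj_eq.
Qed.

Lemma has_indep_family_leq W m n :
  (m <= n)%N -> has_indep_family W n -> has_indep_family W m.
Proof.
move=> le_mn [x [xW x_indep]]; exists (x \o widen_ord le_mn).
split=> [i|]; first exact: xW.
by apply: lin_indep_comp x_indep => i j [] /val_inj.
Qed.

Lemma lin_indep_row n (y : 'I_n -> int -> K) (c : 'rV_n) :
  lin_indep y -> (forall k, lin_comb c y k = 0) -> c = 0.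
Proof.
by move=> y_indep c_y0; apply/rowP => i; rewrite mxE; apply: y_indep c_y0 i.
Qed.

Lemma lin_comb_mulmx n p (u : 'rV_p) (B : 'M_(p, n)) y k :
  lin_comb (u *m B) y k = \sum_(j < p) u 0 j * lin_comb (row j B) y k.
Proof.
rewrite /lin_comb; under eq_bigr do rewrite mxE big_distrl /=.
rewrite exchange_big /=; apply: eq_bigr => j _.
by rewrite big_distrr /=; apply: eq_bigr => i _; rewrite !mxE mulrA.
Qed.

Lemma has_indep_family_rank W n p (y : 'I_n -> int -> K) (S : 'M_(p, n)) :
  (forall c : 'rV_n, (c <= S)%MS -> W (lin_comb c y)) ->
  (forall c : 'rV_n, (c <= S)%MS -> (forall k, lin_comb c y k = 0) -> c = 0) ->
  has_indep_family W (\rank S).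
Proof.
move=> SW S_inj; pose B := row_base S.
have BS : (B <= S)%MS by rewrite eq_row_base.
exists (fun j => lin_comb (row j B) y); split=> [j|d d_0].
  exact/SW/(submx_trans (row_sub _ _) BS).
pose u : 'rV_(\rank S) := \row_j d j.
have uB0 : u *m B = 0.
  apply: S_inj => [|k]; first exact: submx_trans (submxMl _ _) BS.
  by rewrite lin_comb_mulmx -[RHS](d_0 k); apply: eq_bigr => j _; rewrite mxE.
have u0 : u = 0 by apply: (row_free_inj (row_base_free S)); rewrite uB0 mul0mx.
by move=> j; have /rowP/(_ j) := u0; rewrite !mxE.
Qed.

Lemma rank_lt_of_no_indep W m n p (y : 'I_n -> int -> K) (S : 'M_(p, n)) :
  ~ has_indep_family W m ->
  (forall c : 'rV_n, (c <= S)%MS -> W (lin_comb c y)) ->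
  (forall c : 'rV_n, (c <= S)%MS -> (forall k, lin_comb c y k = 0) -> c = 0) ->
  (\rank S < m)%N.
Proof.
move=> no_m SW S_inj; rewrite ltnNge; apply/negP => le_m.
exact: no_m (has_indep_family_leq le_m (has_indep_family_rank SW S_inj)).
Qed.

Definition sample_mx n p (y : 'I_n -> int -> K) (f : 'I_p -> int) : 'M[K]_(n, p) :=
  \matrix_(i, j) y i (f j).

Lemma sub_kermx_sample n p (y : 'I_n -> int -> K) (f : 'I_p -> int) (c : 'rV_n) :
  reflect (forall j, lin_comb c y (f j) = 0) (c <= kermx (sample_mx y f))%MS.
Proof.
rewrite sub_kermx; apply: (iffP eqP) => [/rowP c_f0 j | c_f0].
  by have := c_f0 j; rewrite !mxE => <-; apply: eq_bigr => i _; rewrite mxE.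
apply/rowP => j; rewrite !mxE -[RHS](c_f0 j).
by apply: eq_bigr => i _; rewrite !mxE.
Qed.

Definition window_mx n (y : 'I_n -> int -> K) (L : nat) : 'M[K]_(n, L + L) :=
  sample_mx y (fun j => j%:Z - L%:Z).

Lemma kermx_window_mono n (y : 'I_n -> int -> K) L L' : (L <= L')%N ->
  (kermx (window_mx y L') <= kermx (window_mx y L))%MS.
Proof.
move=> le_LL'; apply/row_subP => i.
have /sub_kermx_sample row_y0 := row_sub i (kermx (window_mx y L')).
apply/sub_kermx_sample => j.
have j_lt : (j + (L' - L) < L' + L')%N by have := ltn_ord j; lia.
have := row_y0 (Ordinal j_lt) => /=.
by have -> : (j + (L' - L))%N%:Z - L'%:Z = j%:Z - L%:Z :> int by lia.
Qed.

Lemma kermx_window_stable n (y : 'I_n -> int -> K) : exists L, forall L',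
  (L <= L')%N -> (kermx (window_mx y L) <= kermx (window_mx y L'))%MS.
Proof.
suff stable_below d : forall L, (\rank (kermx (window_mx y L)) < d)%N ->
    exists L0, forall L', (L0 <= L')%N ->
      (kermx (window_mx y L0) <= kermx (window_mx y L'))%MS.
  exact: (stable_below _ 0%N (ltnSn _)).
elim: d => [//|d IHd] L rank_lt.
have [[L' [le_LL' drop]]|no_drop] := classic (exists L', (L <= L')%N /\
    (\rank (kermx (window_mx y L')) < \rank (kermx (window_mx y L)))%N).
  by apply: (IHd L'); lia.
exists L => L' le_LL'.
have sub_ker := kermx_window_mono y le_LL'.
rewrite -(mxrank_leqif_sup sub_ker).2 eqn_leq mxrankS //= leqNgt.
by apply/negP => lt_rank; apply: no_drop; exists L'.
Qed.

(* The kernel of the infinite sampling c |-> lin_comb c y is already cut out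
   by a finite window, which makes it a subspace in the sense of mxalgebra. *)
Lemma kermx_window_eq0 n (y : 'I_n -> int -> K) : exists L, forall c : 'rV_n,
  (c <= kermx (window_mx y L))%MS <-> (forall k, lin_comb c y k = 0).
Proof.
have [L stable] := kermx_window_stable y; exists L => c.
split=> [c_ker k | c_y0]; last by apply/sub_kermx_sample => j.
pose L' := maxn L (absz k).+1.
have /sub_kermx_sample c_L' := submx_trans c_ker (stable L' (leq_maxl _ _)).
have j_lt : (absz (k + L'%:Z)%R < L' + L')%N by rewrite /L'; lia.
have := c_L' (Ordinal j_lt) => /=.
by have -> : (absz (k + L'%:Z))%:Z - L'%:Z = k by rewrite /L'; lia.
Qed.

Definition restrict (P : pred int) (z : int -> K) (k : int) : K :=
  if P k then z k else 0.

Lemma lin_comb_restrict P n (c : 'rV_n) (y : 'I_n -> int -> K) k :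
  lin_comb c (fun i => restrict P (y i)) k = restrict P (lin_comb c y) k.
Proof.
rewrite /lin_comb /restrict; case: (P k) => //.
by rewrite big1 // => i _; rewrite mulr0.
Qed.

Lemma restrict_ge0_add_lt0 (z : int -> K) k :
  restrict (fun i => 0 <= i) z k + restrict (fun i => i < 0) z k = z k.
Proof. by rewrite /restrict ltNge; case: (0 <= k); rewrite ?addr0 ?add0r. Qed.

Lemma supp_sub_restrict P (z : int -> K) : supp_sub (restrict P z) P.
Proof. by move=> k; rewrite /restrict; case: (P k); rewrite ?eqxx. Qed.

Variables (r : nat) (a : nat -> int -> K).

Lemma in_V_ext (f g : int -> K) :
  (forall k, f k = g k) -> in_V r a f -> in_V r a g.
Proof.
by move=> fg fV n; rewrite -[RHS](fV n); apply: eq_bigr => j _; rewrite fg.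
Qed.

Lemma in_VB (f g : int -> K) :
  in_V r a f -> in_V r a g -> in_V r a (fun k => f k - g k).
Proof.
by move=> fV gV n; under eq_bigr do rewrite mulrBr; rewrite sumrB fV gV subrr.
Qed.

Lemma in_V_lin_comb n (c : 'rV_n) (y : 'I_n -> int -> K) :
  (forall i, in_V r a (y i)) -> in_V r a (lin_comb c y).
Proof.
move=> yV n0; rewrite /lin_comb.
under eq_bigr do rewrite big_distrr /=.
rewrite exchange_big /=; apply: big1 => i _.
rewrite -[RHS](mulr0 (c 0 i)) -[X in _ * X](yV i n0) big_distrr /=.
by apply: eq_bigr => j _; rewrite mulrCA.
Qed.

Lemma in_V_restrict_ge0 (z : int -> K) : in_V r a z ->
  (forall k : int, 0 <= k -> k < r%:Z -> z k = 0) ->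
  in_V r a (restrict (fun k => 0 <= k) z).
Proof.
move=> zV z_init n; have [n_ge0|n_lt0] := leP 0 n.
  rewrite -[RHS](zV n); apply: eq_bigr => j _.
  by rewrite /restrict ifT //; lia.
apply: big1 => j _; rewrite /restrict.
case: ifP => [j_ge0|_]; last by rewrite mulr0.
by rewrite z_init ?mulr0 //; have := ltn_ord j; lia.
Qed.

Lemma in_V_restrict_lt0 (z : int -> K) : in_V r a z ->
  (forall k : int, 0 <= k -> k < r%:Z -> z k = 0) ->
  in_V r a (restrict (fun k => k < 0) z).
Proof.
move=> zV z_init; apply: in_V_ext (in_VB zV (in_V_restrict_ge0 zV z_init)) => k.
by rewrite -(restrict_ge0_add_lt0 z k) addrC addKr.
Qed.

Lemma kermx_sample_initial n (y : 'I_n -> int -> K) (c : 'rV_n) :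
  (c <= kermx (sample_mx y (fun j : 'I_r => j%:Z)))%MS ->
  forall k : int, 0 <= k -> k < r%:Z -> lin_comb c y k = 0.
Proof.
move=> /sub_kermx_sample c_init k k_ge0 k_lt.
have j_lt : (absz k < r)%N by lia.
by have := c_init (Ordinal j_lt) => /=; rewrite gez0_abs.
Qed.

Lemma lin_comb_ge0_ray n (x : 'I_n -> int -> K) (c : 'rV_n) :
  (forall i, in_V r a (x i)) ->
  (c <= kermx (sample_mx x (fun j : 'I_r => j%:Z)))%MS ->
  let y := lin_comb c (fun i => restrict (fun k => 0 <= k) (x i)) in
  in_V r a y /\ supp_sub y (fun i => 0 <= i).
Proof.
move=> xV c_init; split=> [|k]; last first.
  by rewrite lin_comb_restrict; apply: supp_sub_restrict.
have c_x_init := kermx_sample_initial c_init.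
apply: in_V_ext (in_V_restrict_ge0 (in_V_lin_comb c xV) c_x_init) => k.
by rewrite lin_comb_restrict.
Qed.

Lemma lin_comb_lt0_ray n (x : 'I_n -> int -> K) (c : 'rV_n) :
  (forall i, in_V r a (x i)) ->
  (c <= kermx (sample_mx x (fun j : 'I_r => j%:Z)))%MS ->
  let y := lin_comb c (fun i => restrict (fun k => k < 0) (x i)) in
  in_V r a y /\ supp_sub y (fun i => i <= 0).
Proof.
move=> xV c_init; split=> [|k].
  have c_x_init := kermx_sample_initial c_init.
  apply: in_V_ext (in_V_restrict_lt0 (in_V_lin_comb c xV) c_x_init) => k.
  by rewrite lin_comb_restrict.
by rewrite lin_comb_restrict => /supp_sub_restrict /ltW.
Qed.

End Sequences.

Theorem lemma1 (K : fieldType) (r : nat) (a : nat -> int -> K) :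
  inf_dim (in_V r a) ->
  exists i0 : int,
    inf_dim (fun x => in_V r a x /\ supp_sub x (fun i => i0 <= i)) \/
    inf_dim (fun x => in_V r a x /\ supp_sub x (fun i => i <= i0)).
Proof.
move=> V_inf; exists 0.
set Wp := (fun x => _ /\ supp_sub x (fun i => 0 <= i)).
set Wm := (fun x => _ /\ supp_sub x (fun i => i <= 0)).
have [|/not_all_ex_not [m1 no_m1]] := classic (inf_dim Wp); first by left.
have [|/not_all_ex_not [m2 no_m2]] := classic (inf_dim Wm); first by right.
exfalso; have [x [xV x_indep]] := V_inf (r + m1 + m2)%N.
set xp := fun i => restrict (fun k => 0 <= k) (x i).
set xm := fun i => restrict (fun k => k < 0) (x i).
set X0 := sample_mx x (fun j : 'I_r => j%:Z).
have [L xp_ker] := kermx_window_eq0 xp.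
set S1 := (kermx X0 :&: kermx (window_mx xp L))%MS.
have rank_compl : (\rank (kermx X0 :\: S1) < m1)%N.
  apply: (rank_lt_of_no_indep (y := xp) no_m1) => c c_C.
    exact/lin_comb_ge0_ray/(submx_trans c_C (diffmxSl _ _)).
  move=> c_xp0; have c_S1 : (c <= S1)%MS.
    by rewrite sub_capmx (submx_trans c_C (diffmxSl _ _)); apply/xp_ker.
  by apply/eqP; rewrite -submx0 -(capmx_diff (kermx X0) S1) sub_capmx c_C.
have rank_S1 : (\rank S1 < m2)%N.
  apply: (rank_lt_of_no_indep (y := xm) no_m2) => c;
    rewrite sub_capmx => /andP[c_init /xp_ker c_xp0].
    exact: lin_comb_lt0_ray.
  move=> c_xm0; apply: lin_indep_row x_indep _ => k.
  rewrite -(restrict_ge0_add_lt0 (lin_comb c x) k) -!lin_comb_restrict.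
  by rewrite c_xp0 c_xm0 addr0.
have := mxrank_cap_compl (kermx X0) S1; have := mxrankS (capmxSr (kermx X0) S1).
have := mxrank_ker X0; have := rank_leq_col X0; lia.
Qed.
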